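(* Let $\mathcal{M},\mathcal{L}\in\mathbb{C}^{2n\times 2n}$ with $(\mathcal{M},\mathcal{L})$ regular, let $(R_1,T_1)$ and $(R_2,T_2)$ be regular pairs with $R_i,T_i\in\mathbb{C}^{r_i\times r_i}$, and let $U_1\in\mathbb{C}^{2n\times r_1}$, $U_2\in\mathbb{C}^{2n\times r_2}$ have full column rank and satisfy $\mathcal{M}U_1T_1=\mathcal{L}U_1R_1$ and $\mathcal{M}U_2T_2=\mathcal{L}U_2R_2$. (i) If $(\mathcal{M},\mathcal{L})$ is a Hamiltonian pair and $\sigma(R_1,T_1)\cap\sigma(-R_2^H,T_2^H)=\emptyset$, then $U_1$ and $U_2$ are $\mathcal{J}$-orthogonal, i.e. $U_2^H\mathcal{J}U_1=0$. (ii) If $(\mathcal{M},\mathcal{L})$ is a symplectic pair and $\sigma(R_1,T_1)\cap\sigma(T_2^H,R_2^H)=\emptyset$, then $U_2^H\mathcal{J}U_1=0$.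
   Context: $\mathcal{J}=\mathcal{J}_n=\begin{bmatrix}0&I_n\\-I_n&0\end{bmatrix}$. A pair $(\mathcal{M},\mathcal{L})$ of $2n\times2n$ matrices is a Hamiltonian pair if $\mathcal{M}\mathcal{J}\mathcal{L}^H=-\mathcal{L}\mathcal{J}\mathcal{M}^H$, and a symplectic pair if $\mathcal{M}\mathcal{J}\mathcal{M}^H=\mathcal{L}\mathcal{J}\mathcal{L}^H$. A pair $(A,B)$ of square matrices is regular if $\det(A-\lambda B)\neq0$ for some $\lambda\in\mathbb{C}$; its spectrum $\sigma(A,B)$ is the set of $\lambda\in\mathbb{C}$ with $\det(A-\lambda B)=0$, together with $\infty$ if $B$ is singular. *)

From HB Require Import structures.
From mathcomp Require Import all_boot all_order all_algebra.
Set Implicit Arguments. Unset Strict Implicit. Unset Printing Implicit Defensive.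
Import Order.TTheory GRing.Theory Num.Theory.
Local Open Scope ring_scope.

(* Complex matrices: we work over an arbitrary numClosedFieldType C
   (e.g. the complex numbers), with conjugation Num.conj. *)

Definition ctrmx (C : numClosedFieldType) m n (A : 'M[C]_(m, n)) : 'M[C]_(n, m) :=
  (map_mx (@Num.conj C) A)^T.

Definition Jmx (C : numClosedFieldType) (n : nat) : 'M[C]_(n + n) :=
  block_mx 0 1%:M (- 1%:M) 0.

Definition hamiltonian_pair (C : numClosedFieldType) n (M L : 'M[C]_(n + n)) :=
  M *m Jmx C n *m ctrmx L = - (L *m Jmx C n *m ctrmx M).

Definition symplectic_pair (C : numClosedFieldType) n (M L : 'M[C]_(n + n)) :=
  M *m Jmx C n *m ctrmx M = L *m Jmx C n *m ctrmx L.

Definition regular_pair (C : numClosedFieldType) m (A B : 'M[C]_m) :=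
  exists l : C, \det (A - l *: B) != 0.

(* spectrum of (A,B) as a subset of C ∪ {∞}: Some l = finite l, None = ∞ *)
Definition in_spectrum (C : numClosedFieldType) m (A B : 'M[C]_m) (z : option C) : Prop :=
  match z with
  | Some l => \det (A - l *: B) = 0
  | None => \det B = 0
  end.

From HB Require Import structures.
From mathcomp Require Import all_boot all_order all_algebra.
From mathcomp Require Import ring.
Set Implicit Arguments. Unset Strict Implicit. Unset Printing Implicit Defensive.
Import Order.TTheory GRing.Theory Num.Theory.
Local Open Scope ring_scope.

(** Put Y := U2^H J U1.  For a regular pair (M, L), every solution (V, W) of
    M V = L W is a right multiple of any solution (F, G) with [F; G] of full
    column rank.  Such a solution is (-J L^H, J M^H) when (M, L) is Hamiltonian
    and (J M^H, J L^H) when it is symplectic.  Taking (V, W) = (U2 T2, U2 R2) and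
    using M U1 T1 = L U1 R1 then turns Y into a solution of the generalized
    Sylvester equation T2^H Y R1 = -R2^H Y T1, resp. R2^H Y R1 = T2^H Y T1.
    An equation Q Y A = P Y B between regular pairs (A, B), (P, Q) with disjoint
    spectra only has the solution Y = 0: for l outside both spectra it becomes
    Y S = Z Y with S = B (A - l B)^-1 and Z = (P - l Q)^-1 Q, an eigenvalue mu
    of S or Z corresponds to the spectral point l + 1/mu (infinity for mu = 0),
    so the characteristic polynomial of S, which kills S, is invertible at Z. *)

Section ConjugateTranspose.
Variable C : numClosedFieldType.

Lemma ctrmxK m n (A : 'M[C]_(m, n)) : ctrmx (ctrmx A) = A.
Proof. by apply/matrixP => i j; rewrite !mxE conjCK. Qed.

Lemma ctrmxM m n p (A : 'M[C]_(m, n)) (B : 'M[C]_(n, p)) :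
  ctrmx (A *m B) = ctrmx B *m ctrmx A.
Proof. by rewrite /ctrmx map_mxM trmx_mul. Qed.

Lemma ctrmxN m n (A : 'M[C]_(m, n)) : ctrmx (- A) = - ctrmx A.
Proof. by apply/matrixP => i j; rewrite !mxE rmorphN. Qed.

Lemma ctrmx_subZ m (A B : 'M[C]_m) l :
  ctrmx (A - l *: B) = ctrmx A - l^* *: ctrmx B.
Proof. by apply/matrixP => i j; rewrite !mxE rmorphB rmorphM. Qed.

Lemma det_ctrmx m (A : 'M[C]_m) : \det (ctrmx A) = (\det A)^*.
Proof. by rewrite det_tr det_map_mx. Qed.

Lemma ctrmx_row_mx m n1 n2 (A : 'M[C]_(m, n1)) (B : 'M[C]_(m, n2)) :
  ctrmx (row_mx A B) = col_mx (ctrmx A) (ctrmx B).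
Proof. by rewrite /ctrmx map_row_mx tr_row_mx. Qed.

Lemma mxrank_ctrmx m n (A : 'M[C]_(m, n)) : \rank (ctrmx A) = \rank A.
Proof. by rewrite mxrank_tr mxrank_map. Qed.

Lemma ctrmx_Jmx_mul_Jmx n : ctrmx (Jmx C n) *m Jmx C n = 1%:M.
Proof.
have conj1 : map_mx (@Num.conj C) (1%:M : 'M_n) = 1%:M by apply: map_mx1.
have conjN1 : map_mx (@Num.conj C) (- 1%:M : 'M_n) = - 1%:M.
  by apply/matrixP => i j; rewrite !mxE rmorphN rmorphMn rmorph1.
have trN1 : (- 1%:M : 'M[C]_n)^T = - 1%:M.
  by apply/matrixP => i j; rewrite !mxE eq_sym.
rewrite /Jmx /ctrmx map_block_mx tr_block_mx mulmx_block !map_mx0 !trmx0.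
rewrite !mul0mx !mulmx0 !add0r !addr0 conj1 conjN1 !trmx1 !mulmx1 trN1.
by rewrite mulNmx mulmxN mul1mx opprK -scalar_mx_block.
Qed.

End ConjugateTranspose.

Lemma exists_notin (R : numDomainType) (s : seq R) : exists x, x \notin s.
Proof.
pose t := [seq (i%:R : R) | i <- iota 0 (size s).+1].
have t_uniq : uniq t.
  by rewrite map_inj_uniq ?iota_uniq // => i j /eqP; rewrite eqr_nat => /eqP.
have : ~~ all (mem s) t.
  apply/negP => /allP t_sub; have := uniq_leq_size t_uniq t_sub.
  by rewrite size_map size_iota ltnn.
by case/allPn => x _ xNs; exists x.
Qed.

Section RegularPairs.
Variable C : numClosedFieldType.

Lemma regular_pair_cofinite m (A B : 'M[C]_m) : regular_pair A B ->
  exists s : seq C, forall l, l \notin s -> \det (A - l *: B) != 0.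
Proof.
case=> l0 detl0.
pose p := \det (map_mx polyC A - 'X *: map_mx polyC B).
have pE l : p.[l] = \det (A - l *: B).
  rewrite -horner_evalE -det_map_mx; congr (\det _).
  by apply/matrixP => i j; rewrite !mxE /= !horner_evalE !hornerE.
have p_neq0 : p != 0 by apply: contraNneq detl0 => p0; rewrite -pE p0 horner0.
have [s ps] := closed_field_poly_normal p.
exists s => l lNs; rewrite -pE ps hornerZ horner_prod mulf_neq0 ?lead_coef_eq0 //.
rewrite prodf_seq_neq0; apply/allP => z zs /=.
by rewrite hornerXsubC subr_eq0; apply: contraNneq lNs => ->.
Qed.

Lemma regular_pair_ctrmx m (A B : 'M[C]_m) :
  regular_pair A B -> regular_pair (ctrmx A) (ctrmx B).
Proof. by case=> l detl; exists l^*; rewrite -ctrmx_subZ det_ctrmx conjC_eq0. Qed.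

Lemma regular_pair_oppl m (A B : 'M[C]_m) :
  regular_pair A B -> regular_pair (- A) B.
Proof.
case=> l detl; exists (- l).
have -> : - A - (- l) *: B = (- 1) *: (A - l *: B).
  by rewrite scaleN1r scaleNr opprK opprB addrC.
by rewrite detZ mulf_neq0 ?expf_neq0 ?oppr_eq0 ?oner_eq0.
Qed.

Lemma regular_pair_swap m (A B : 'M[C]_m) :
  regular_pair A B -> regular_pair B A.
Proof.
move=> /regular_pair_cofinite [s dets].
have [l] := exists_notin (0 :: s); rewrite inE negb_or => /andP [l_neq0 lNs].
exists l^-1.
have -> : B - l^-1 *: A = (- l^-1) *: (A - l *: B).
  by rewrite scalerBr !scaleNr scalerA mulVf // scale1r opprK addrC.
by rewrite detZ mulf_neq0 ?dets ?expf_neq0 // oppr_eq0 invr_eq0.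
Qed.

End RegularPairs.

Section Sylvester.
Variable F : closedFieldType.

Lemma eigenvalue_det n (A : 'M[F]_n) a : eigenvalue A a = (\det (A - a%:M) == 0).
Proof. by rewrite /eigenvalue /eigenspace kermx_eq0 row_free_unit unitmxE unitfE negbK. Qed.

Lemma sylvester_eq0 m k (S : 'M[F]_m.+1) (Z : 'M[F]_k.+1) (Y : 'M[F]_(k.+1, m.+1)) :
  (forall a, eigenvalue S a -> ~~ eigenvalue Z a) -> Y *m S = Z *m Y -> Y = 0.
Proof.
move=> disjSZ YS.
have Yhorner p : Y *m horner_mx S p = horner_mx Z p *m Y.
  elim/poly_ind: p => [|p c IHp]; first by rewrite !rmorph0 mulmx0 mul0mx.
  rewrite !rmorphD !rmorphM /= !horner_mx_X !horner_mx_C -!mulmxE.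
  rewrite mulmxDr mulmxDl mulmxA IHp -(mulmxA _ Y) YS mulmxA.
  by rewrite mul_mx_scalar mul_scalar_mx.
have [s charS] := closed_field_poly_normal (char_poly S).
rewrite (monicP (char_poly_monic S)) scale1r in charS.
suff Zchar_unit : horner_mx Z (char_poly S) \in unitmx.
  by rewrite -[Y]mul1mx -(mulVmx Zchar_unit) -mulmxA -Yhorner Cayley_Hamilton !mulmx0.
rewrite charS rmorph_prod big_seq; apply: (big_ind (fun X => X \in unitmx)).
- exact: unitmx1.
- by move=> X1 X2; rewrite -mulmxE unitmx_mul => -> ->.
move=> a a_s; rewrite rmorphB /= horner_mx_X horner_mx_C unitmxE unitfE.
rewrite -eigenvalue_det; apply: disjSZ.
rewrite eigenvalue_root_char charS /root horner_prod prodf_seq_eq0.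
by apply/hasP; exists a => //=; rewrite hornerXsubC subrr.
Qed.

End Sylvester.

Section GeneralizedSylvester.
Variable C : numClosedFieldType.

Definition inv_shift (l mu : C) : option C :=
  if mu == 0 then None else Some (l + mu^-1).

Lemma in_spectrum_inv_shift m (A B : 'M[C]_m) l mu :
  \det (B - mu *: (A - l *: B)) = 0 -> in_spectrum A B (inv_shift l mu).
Proof.
rewrite /inv_shift; have [-> | mu_neq0] := eqVneq mu 0; first by rewrite scale0r subr0.
have -> : B - mu *: (A - l *: B) = (- mu) *: (A - (l + mu^-1) *: B).
  by apply/matrixP => i j; rewrite !mxE; field.
by rewrite detZ => /eqP; rewrite mulf_eq0 expf_eq0 oppr_eq0 (negbTE mu_neq0) andbF => /eqP.
Qed.

Lemma generalized_sylvester_eq0 m k (A B : 'M[C]_m) (P Q : 'M[C]_k) (Y : 'M[C]_(k, m)) :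
  regular_pair A B -> regular_pair P Q ->
  (forall z, ~ (in_spectrum A B z /\ in_spectrum P Q z)) ->
  Q *m Y *m A = P *m Y *m B -> Y = 0.
Proof.
case: m A B Y => [|m] A B Y regAB regPQ disjAP QYA; first by rewrite thinmx0.
case: k P Q Y regPQ disjAP QYA => [|k] P Q Y regPQ disjAP QYA; first by rewrite flatmx0.
have [sA detA] := regular_pair_cofinite regAB.
have [sP detP] := regular_pair_cofinite regPQ.
have [l] := exists_notin (sA ++ sP); rewrite mem_cat negb_or => /andP [lNsA lNsP].
set A' := A - l *: B; set P' := P - l *: Q.
have A'_unit : A' \in unitmx by rewrite unitmxE unitfE detA.
have P'_unit : P' \in unitmx by rewrite unitmxE unitfE detP.
apply: (@sylvester_eq0 _ _ _ (B *m invmx A') (invmx P' *m Q)); last first.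
  have P'YB : P' *m Y *m B = Q *m Y *m A'.
    by rewrite /P' /A' !mulmxBl mulmxBr -QYA -!scalemxAl -scalemxAr -!mulmxA.
  rewrite mulmxA; apply: (canLR (mulmxK A'_unit)); rewrite -!mulmxA.
  by apply: (canRL (mulKmx P'_unit)); rewrite !mulmxA P'YB.
move=> mu; rewrite !eigenvalue_det => /eqP detS; apply/negP => /eqP detZ.
have SE : B - mu *: A' = (B *m invmx A' - mu%:M) *m A'.
  by rewrite mulmxBl mulmxKV // mul_scalar_mx.
have ZE : Q - mu *: P' = P' *m (invmx P' *m Q - mu%:M).
  by rewrite mulmxBr mulKVmx // mul_mx_scalar.
apply: (disjAP (inv_shift l mu)); split; apply: in_spectrum_inv_shift.
  by rewrite SE det_mulmx detS mul0r.
by rewrite ZE det_mulmx detZ mulr0.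
Qed.

End GeneralizedSylvester.

Lemma mulmx_eq0_factor (F : fieldType) m k p r (G : 'M[F]_(m, k)) (H : 'M[F]_(k, p))
    (V : 'M[F]_(k, r)) :
  (\rank G + \rank H = k)%N -> G *m H = 0 -> G *m V = 0 -> exists X, V = H *m X.
Proof.
move=> rankGH GH GV.
have sub_ker (W : 'M_(k, _)) : G *m W = 0 -> (W^T <= kermx G^T)%MS.
  by move=> GW; apply/sub_kermxP; rewrite -trmx_mul GW trmx0.
have ker_sub : (kermx G^T <= H^T)%MS.
  rewrite -(mxrank_leqif_sup (sub_ker _ _ GH)).2 // mxrank_ker mxrank_tr mxrank_tr.
  by rewrite -[X in (X - _)%N]rankGH addKn.
have /submxP [X VX] := submx_trans (sub_ker _ _ GV) ker_sub.
by exists X^T; rewrite -(trmxK V) VX trmx_mul trmxK.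
Qed.

Lemma rank_row_mx_unit (F : fieldType) m (A B X Y : 'M[F]_m) :
  A *m X + B *m Y \in unitmx -> \rank (row_mx A B) = m.
Proof.
move=> /mxrank_unit rank_comb; apply/eqP; rewrite eqn_leq rank_leq_row /=.
by rewrite -{1}rank_comb -mul_row_col mxrankM_maxl.
Qed.

Lemma regular_pair_kernel_factor (C : numClosedFieldType) k r (M L F G : 'M[C]_k)
    (V W : 'M[C]_(k, r)) :
  regular_pair M L -> \rank (col_mx F G) = k -> M *m F = L *m G -> M *m V = L *m W ->
  exists X, V = F *m X /\ W = G *m X.
Proof.
move=> [l detl] rankFG MF MV.
have rankML : \rank (row_mx M (- L)) = k.
  apply: (@rank_row_mx_unit _ _ _ _ 1%:M l%:M).
  by rewrite mulmx1 mulNmx mul_mx_scalar unitmxE unitfE.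
have [|||X VWX] := @mulmx_eq0_factor _ _ _ _ _ (row_mx M (- L)) (col_mx F G) (col_mx V W).
- by rewrite rankML rankFG addnn.
- by rewrite mul_row_col mulNmx MF subrr.
- by rewrite mul_row_col mulNmx MV subrr.
by exists X; move: VWX; rewrite mul_col_mx => /eq_col_mx.
Qed.

Section JOrthogonality.
Variables (C : numClosedFieldType) (n : nat).
Local Notation J := (Jmx C n).

Lemma rank_col_mx_Jmx_ctrmx (A B : 'M[C]_(n + n)) :
  \rank (col_mx (J *m ctrmx A) (J *m ctrmx B)) = \rank (row_mx A B).
Proof.
have J_unit : J \in unitmx by case: (mulmx1_unit (ctrmx_Jmx_mul_Jmx C n)).
have JJ_full : row_full (block_mx J 0 0 J).
  by rewrite row_full_unit unitmxE det_ublock unitrM -!unitmxE J_unit.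
have -> : col_mx (J *m ctrmx A) (J *m ctrmx B)
          = block_mx J 0 0 J *m col_mx (ctrmx A) (ctrmx B).
  by rewrite mul_block_col !mul0mx addr0 add0r.
by rewrite (eqmxMfull _ JJ_full) -ctrmx_row_mx mxrank_ctrmx.
Qed.

Lemma ctrmx_mul_Jmx_transfer r p (K : 'M[C]_(n + n)) (X U : 'M[C]_(n + n, r))
    (T : 'M[C]_r) (V : 'M[C]_(n + n, p)) :
  U *m T = J *m ctrmx K *m X -> ctrmx T *m (ctrmx U *m J *m V) = ctrmx X *m K *m V.
Proof.
move=> UT; rewrite !mulmxA -ctrmxM UT !ctrmxM ctrmxK !mulmxA.
by rewrite -(mulmxA _ (ctrmx J)) ctrmx_Jmx_mul_Jmx mulmx1.
Qed.

Lemma hamiltonian_pair_Jmx_orthogonal r1 r2 (M L : 'M[C]_(n + n))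
    (R1 T1 : 'M[C]_r1) (R2 T2 : 'M[C]_r2) (U1 : 'M[C]_(n + n, r1)) (U2 : 'M[C]_(n + n, r2)) :
  regular_pair M L -> regular_pair R1 T1 -> regular_pair R2 T2 -> hamiltonian_pair M L ->
  (forall z, ~ (in_spectrum R1 T1 z /\ in_spectrum (- ctrmx R2) (ctrmx T2) z)) ->
  M *m U1 *m T1 = L *m U1 *m R1 -> M *m U2 *m T2 = L *m U2 *m R2 ->
  ctrmx U2 *m J *m U1 = 0.
Proof.
move=> regML regR1 regR2 ham disj MU1 MU2.
have [X [U2T2 U2R2]] :
    exists X, U2 *m T2 = J *m ctrmx (- L) *m X /\ U2 *m R2 = J *m ctrmx M *m X.
  have [l detl] := regML.
  apply: (regular_pair_kernel_factor regML); last by rewrite !mulmxA.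
    rewrite rank_col_mx_Jmx_ctrmx (@rank_row_mx_unit _ _ _ _ l%:M 1%:M) //.
    by rewrite mulmx1 mulNmx mul_mx_scalar addrC unitmxE unitfE.
  by rewrite ctrmxN !mulmxN !mulmxA ham opprK.
apply: (generalized_sylvester_eq0 (Y := ctrmx U2 *m J *m U1) regR1
  (regular_pair_oppl (regular_pair_ctrmx regR2)) disj).
rewrite (ctrmx_mul_Jmx_transfer _ U2T2) mulNmx (ctrmx_mul_Jmx_transfer _ U2R2).
by rewrite mulmxN !mulNmx -!mulmxA !(mulmxA _ U1) MU1.
Qed.

Lemma symplectic_pair_Jmx_orthogonal r1 r2 (M L : 'M[C]_(n + n))
    (R1 T1 : 'M[C]_r1) (R2 T2 : 'M[C]_r2) (U1 : 'M[C]_(n + n, r1)) (U2 : 'M[C]_(n + n, r2)) :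
  regular_pair M L -> regular_pair R1 T1 -> regular_pair R2 T2 -> symplectic_pair M L ->
  (forall z, ~ (in_spectrum R1 T1 z /\ in_spectrum (ctrmx T2) (ctrmx R2) z)) ->
  M *m U1 *m T1 = L *m U1 *m R1 -> M *m U2 *m T2 = L *m U2 *m R2 ->
  ctrmx U2 *m J *m U1 = 0.
Proof.
move=> regML regR1 regR2 symp disj MU1 MU2.
have [X [U2T2 U2R2]] :
    exists X, U2 *m T2 = J *m ctrmx M *m X /\ U2 *m R2 = J *m ctrmx L *m X.
  have [l detl] := regML.
  apply: (regular_pair_kernel_factor regML); last by rewrite !mulmxA.
    rewrite rank_col_mx_Jmx_ctrmx (@rank_row_mx_unit _ _ _ _ 1%:M (- l)%:M) //.
    by rewrite mulmx1 mul_mx_scalar scaleNr unitmxE unitfE.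
  by rewrite !mulmxA symp.
apply: (generalized_sylvester_eq0 (Y := ctrmx U2 *m J *m U1) regR1
  (regular_pair_ctrmx (regular_pair_swap regR2)) disj).
rewrite (ctrmx_mul_Jmx_transfer _ U2T2) (ctrmx_mul_Jmx_transfer _ U2R2).
by rewrite -!mulmxA !(mulmxA _ U1) MU1.
Qed.

End JOrthogonality.

Theorem theorem2p2 (C : numClosedFieldType) (n r1 r2 : nat)
  (M L : 'M[C]_(n + n)) (R1 T1 : 'M[C]_r1) (R2 T2 : 'M[C]_r2)
  (U1 : 'M[C]_(n + n, r1)) (U2 : 'M[C]_(n + n, r2)) :
  regular_pair M L ->
  regular_pair R1 T1 -> regular_pair R2 T2 ->
  \rank U1 = r1 -> \rank U2 = r2 ->
  M *m U1 *m T1 = L *m U1 *m R1 ->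
  M *m U2 *m T2 = L *m U2 *m R2 ->
  (hamiltonian_pair M L ->
   (forall z, ~ (in_spectrum R1 T1 z /\ in_spectrum (- ctrmx R2) (ctrmx T2) z)) ->
   ctrmx U2 *m Jmx C n *m U1 = 0)
  /\
  (symplectic_pair M L ->
   (forall z, ~ (in_spectrum R1 T1 z /\ in_spectrum (ctrmx T2) (ctrmx R2) z)) ->
   ctrmx U2 *m Jmx C n *m U1 = 0).
Proof.
move=> regML regR1 regR2 _ _ MU1 MU2; split => [ham | symp] disj.
  exact: hamiltonian_pair_Jmx_orthogonal regML regR1 regR2 ham disj MU1 MU2.
exact: symplectic_pair_Jmx_orthogonal regML regR1 regR2 symp disj MU1 MU2.
Qed.
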